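(* Let $m=2^p>2$ and $r_1,\dots,r_m\in\{1,\dots,m\}$ (repetitions allowed) with $b(r_1-1)\oplus\dots\oplus b(r_m-1)=0$, and let $A$ be the $m\times m$ matrix whose $i$-th row is the $r_i$-th row of $H(m)$. Fix an index $i$ and some $r'_i\in\{1,\dots,m\}$ with $r'_i\neq r_i$, and let $B$ be obtained from $A$ by replacing its $i$-th row with the $r'_i$-th row of $H(m)$. Then the row indices of $B$ have nonzero XOR, i.e. $b(r_1-1)\oplus\dots\oplus b(r'_i-1)\oplus\dots\oplus b(r_m-1)\neq0$, and hence $\mathrm{perm}\,B=0$.
   Context: For $m=2^p$, the Sylvester matrix $H(m)$ is defined recursively by $H(1)=[1]$ and $H(2^p)=\begin{bmatrix}H(2^{p-1})&H(2^{p-1})\\ H(2^{p-1})&-H(2^{p-1})\end{bmatrix}$, rows and columns indexed $1,\dots,m$. Here $b(x)$ denotes the $p$-bit binary representation of $x\in\{0,\dots,m-1\}$ and $\oplus$ is bitwise XOR. $\mathrm{perm}\,A=\sum_{\sigma\in S_m}\prod_{i=1}^m a_{i,\sigma(i)}$. *)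

From HB Require Import structures.
From mathcomp Require Import all_boot all_order all_algebra all_fingroup.
Set Implicit Arguments. Unset Strict Implicit. Unset Printing Implicit Defensive.
Import GRing.Theory Num.Theory.
Local Open Scope ring_scope.

(* Entries of the Sylvester matrix H(2^p), 0-based indices, following the
   recursive block definition
     H(2^(p+1)) = [[H(2^p), H(2^p)], [H(2^p), -H(2^p)]]. *)
Fixpoint sylv (p : nat) (i j : nat) : int :=
  match p with
  | 0 => 1
  | p'.+1 =>
      let h := (2 ^ p')%N in
      if (h <= i)%N && (h <= j)%N then - sylv p' (i - h) (j - h)
      else sylv p' (i %% h) (j %% h)
  end.

Definition Hsyl (p : nat) : 'M[int]_(2 ^ p) :=
  \matrix_(i, j) sylv p i j.

Definition permanent (R : pzRingType) (n : nat) (A : 'M[R]_n) : R :=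
  \sum_(s : 'S_n) \prod_(i < n) A i (s i).

Definition bin (p x : nat) : {ffun 'I_p -> bool} :=
  [ffun k : 'I_p => odd (x %/ 2 ^ k)].

Definition xorsum (p n : nat) (v : 'I_n -> {ffun 'I_p -> bool})
  : {ffun 'I_p -> bool} :=
  [ffun k => \big[addb/false]_(i < n) v i k].

Definition bzero (p : nat) : {ffun 'I_p -> bool} := [ffun _ => false].

(* Entry (i, j) of H(2^p) is (-1)^(b(i).b(j)), so a row of B is a character
   j |-> (-1)^(u.b(j)) of the group of bit vectors.  If the row labels u_i have
   nonzero XOR, pick a bit k set in it and translate the columns by the k-th
   unit vector: every term of the permanent is multiplied by (-1)^(sum_i u_i k)
   = -1, so the permanent equals its own opposite.  Changing one row label
   keeps the XOR zero only if the label does not change, and b is injective on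
   {0, ..., 2^p - 1}. *)
From HB Require Import structures.
From mathcomp Require Import all_boot all_order all_algebra all_fingroup.
From mathcomp Require Import zify.
Set Implicit Arguments. Unset Strict Implicit. Unset Printing Implicit Defensive.
Import GRing.Theory Num.Theory.
Local Open Scope ring_scope.

Section BitVectors.

Variable p : nat.
Notation bits := {ffun 'I_p -> bool}.

Definition dotv (u v : bits) : bool := \big[addb/false]_(k < p) (u k && v k).

Definition xorv (u v : bits) : bits := [ffun k => u k (+) v k].

Definition unitv (k0 : 'I_p) : bits := [ffun k => k == k0].

Lemma dotv_xorr u v w : dotv u (xorv v w) = dotv u v (+) dotv u w.
Proof. by rewrite /dotv -big_split; apply: eq_bigr => k _; rewrite ffunE andb_addr. Qed.

Lemma dotv_unitr u k0 : dotv u (unitv k0) = u k0.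
Proof.
rewrite /dotv (bigD1 k0) //= ffunE eqxx andbT big1 ?addbF // => k /negbTE nk.
by rewrite ffunE nk andbF.
Qed.

Lemma xorvK v : cancel (xorv^~ v) (xorv^~ v).
Proof. by move=> u; apply/ffunP => k; rewrite !ffunE addbK. Qed.

Lemma eq_xorsum n (v w : 'I_n -> bits) : v =1 w -> xorsum v = xorsum w.
Proof. by move=> vw; apply/ffunP => k; rewrite !ffunE; apply: eq_bigr => i _; rewrite vw. Qed.

Lemma xorsum_update_eq0 n (u : 'I_n -> bits) i0 x :
  xorsum u = bzero p ->
  xorsum (fun i => if i == i0 then x else u i) = bzero p -> x = u i0.
Proof.
move=> /ffunP u0 /ffunP v0; apply/ffunP => k.
move: (u0 k) (v0 k); rewrite !ffunE.
rewrite [X in X = _ -> _](bigD1 i0) // [X in _ -> X = _ -> _](bigD1 i0) //= eqxx.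
have -> : \big[addb/false]_(i | i != i0) (if i == i0 then x else u i) k
        = \big[addb/false]_(i | i != i0) u i k by apply: eq_bigr => i /negbTE->.
by case: (u i0 k) (x k) (\big[addb/false]_(i | i != i0) u i k) => [] [] [].
Qed.

End BitVectors.

Lemma odd_divn_modX p k i : (k < p)%N -> odd ((i %% 2 ^ p) %/ 2 ^ k) = odd (i %/ 2 ^ k).
Proof.
move=> kp; rewrite {2}(divn_eq i (2 ^ p)).
have -> : (2 ^ p = 2 ^ (p - k) * 2 ^ k)%N by rewrite -expnD subnK // ltnW.
rewrite mulnA divnMDl ?expn_gt0 // oddD oddM oddX.
by rewrite subn_eq0 leqNgt kp andbF.
Qed.

Lemma odd_divn_top p i : (i < 2 ^ p.+1)%N -> odd (i %/ 2 ^ p) = (2 ^ p <= i)%N.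
Proof.
move=> ip; have : (i %/ 2 ^ p < 2)%N by rewrite ltn_divLR ?expn_gt0 // -expnS.
rewrite -[X in (X <= i)%N]mul1n -leq_divRL ?expn_gt0 //.
by case: (i %/ 2 ^ p)%N => [|[|]].
Qed.

Lemma dotv_bin_mod p i j :
  dotv (bin p (i %% 2 ^ p)) (bin p (j %% 2 ^ p)) =
  \big[addb/false]_(k < p) (bin p.+1 i (widen_ord (leqnSn p) k)
                             && bin p.+1 j (widen_ord (leqnSn p) k)).
Proof. by apply: eq_bigr => k _; rewrite !ffunE /= !odd_divn_modX. Qed.

Lemma sylv_sign p i j : (i < 2 ^ p)%N -> (j < 2 ^ p)%N ->
  sylv p i j = (-1) ^+ dotv (bin p i) (bin p j).
Proof.
elim: p i j => [|p IH] i j hi hj; first by rewrite /dotv big_ord0.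
rewrite /dotv big_ord_recr /= !ffunE /= odd_divn_top // odd_divn_top //.
have lt_mod (x : nat) : (x %% 2 ^ p < 2 ^ p)%N by rewrite ltn_pmod ?expn_gt0.
have sub_mod x : (2 ^ p <= x)%N -> (x < 2 ^ p.+1)%N -> (x - 2 ^ p = x %% 2 ^ p)%N.
  move=> lo hi'; rewrite -{2}(subnK lo) modnDr modn_small //.
  by move: hi'; rewrite expnS; lia.
case: ifP => [/andP[hi2 hj2] | _].
  rewrite !sub_mod // IH // -dotv_bin_mod.
  by rewrite signr_addb expr1 mulrN1.
by rewrite addbF IH // -dotv_bin_mod.
Qed.

Lemma bin_inj p x y : (x < 2 ^ p)%N -> (y < 2 ^ p)%N -> bin p x = bin p y -> x = y.
Proof.
elim: p x y => [|p IH] x y hx hy /ffunP bxy.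
  by rewrite expn0 !ltnS !leqn0 in hx hy; rewrite (eqP hx) (eqP hy).
have odd_xy : odd x = odd y by move: (bxy ord0); rewrite !ffunE /= expn0 !divn1.
have half_xy : (x %/ 2 = y %/ 2)%N.
  apply: IH; rewrite ?ltn_divLR -?expnSr //.
  apply/ffunP => k; move: (bxy (lift ord0 k)); rewrite !ffunE /=.
  by rewrite /bump /= add1n expnS !divnMA.
by rewrite (divn_eq x 2) (divn_eq y 2) half_xy !modn2 odd_xy.
Qed.

Lemma bin_ord_bij p : bijective (fun j : 'I_(2 ^ p) => bin p j).
Proof.
apply: inj_card_bij => [x y /(bin_inj (ltn_ord x) (ltn_ord y))/val_inj //|].
by rewrite card_ffun card_bool !card_ord.
Qed.

Section PermanentOfCharacters.

Variables (R : numDomainType) (p : nat) (u : 'I_(2 ^ p) -> {ffun 'I_p -> bool}).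

Definition character_mx : 'M[R]_(2 ^ p) :=
  \matrix_(i, j) (-1) ^+ dotv (u i) (bin p j).

Lemma character_mx_term (s : 'S_(2 ^ p)) :
  \prod_i character_mx i (s i) = (-1) ^+ \big[addb/false]_i dotv (u i) (bin p (s i)).
Proof.
rewrite (big_morph (fun b : bool => (-1) ^+ b : R) (@signr_addb R)
  (erefl : (-1) ^+ false = 1 :> R)).
by apply: eq_bigr => i _; rewrite mxE.
Qed.

Lemma permanent_character_mx : xorsum u != bzero p -> permanent character_mx = 0.
Proof.
move=> nz_u; have [k0 u_k0] : exists k0, \big[addb/false]_i u i k0.
  apply/existsP; apply: contraR nz_u => /existsPn u0.
  by apply/eqP/ffunP => k; rewrite !ffunE; apply/negbTE/u0.
have [ord_of_bin binK ord_of_binK] := bin_ord_bij p.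
pose flip (j : 'I_(2 ^ p)) := ord_of_bin (xorv (bin p j) (unitv k0)).
have flip_inj : injective flip.
  move=> x y /(congr1 (fun j : 'I_(2 ^ p) => bin p j)); rewrite !ord_of_binK.
  by move=> /(can_inj (xorvK _)); exact: (can_inj binK).
set S := permanent _; suff : S = - S.
  by move/eqP; rewrite -subr_eq0 opprK -mulr2n mulrn_eq0 /= => /eqP.
rewrite {1}/S /permanent (reindex_inj (mulIg (perm flip_inj))) -sumrN.
apply: eq_bigr => s _; rewrite !character_mx_term.
under eq_bigr do rewrite permM permE ord_of_binK dotv_xorr dotv_unitr.
by rewrite big_split /= u_k0 signr_addb expr1 mulrN1.
Qed.

End PermanentOfCharacters.

Theorem corollary3 (p : nat) (hm : (2 < 2 ^ p)%N)
    (r : 'I_(2 ^ p) -> 'I_(2 ^ p))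
    (hr : xorsum (fun i => bin p (r i)) = bzero p)
    (i0 : 'I_(2 ^ p)) (r' : 'I_(2 ^ p)) (hne : r' != r i0) :
  let A : 'M[int]_(2 ^ p) := \matrix_(i, j) Hsyl p (r i) j in
  let B : 'M[int]_(2 ^ p) :=
    \matrix_(i, j) (if i == i0 then Hsyl p r' j else A i j) in
  xorsum (fun i => bin p (if i == i0 then r' else r i)) != bzero p
  /\ permanent B = 0.
Proof.
move=> A B; set u := fun i => bin p _.
have nz_u : xorsum u != bzero p.
  apply: contra hne => /eqP u0; apply/eqP/val_inj/(bin_inj (ltn_ord _) (ltn_ord _)).
  apply: (xorsum_update_eq0 hr); rewrite -u0; apply: eq_xorsum => i.
  by rewrite /u; case: (i == i0).
have -> : B = character_mx _ u.
  apply/matrixP => i j; rewrite !mxE /u.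
  by case: (i == i0); rewrite ?mxE sylv_sign.
by split; last exact: permanent_character_mx.
Qed.
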